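(* Let $\alpha,\beta>0$ and set $a=\frac{1}{1+\alpha}$, $\theta=\frac{\beta}{1+\alpha}$. For every $n\ge1$, the random partition of $\{1,\dots,n\}$ produced at time $n$ by the Chinese restaurant process with parameters $a$ and $\theta$ has the same distribution as the partition of $\{1,\dots,n\}$ into the label sets of the branches (subtrees rooted at the children of the root) of the random tree with $n+1$ nodes produced by the growth process of the family $\mathcal{T}_{\alpha,\beta}$.
   Context: Chinese restaurant process with parameters $0<a<1$, $\theta>-a$: at time $1$ the partition is $\{\{1\}\}$. Given a partition of $\{1,\dots,n\}$ with $k$ blocks $t_1,\dots,t_k$, element $n+1$ is added to block $t_i$ with probability $\frac{|t_i|-a}{n+\theta}$, and forms a new singleton block with probability $\frac{\theta+ka}{n+\theta}$. Growth process of $\mathcal{T}_{\alpha,\beta}$ (generalized plane recursive trees with root weight $(1-t)^{-\beta}$ and non-root weight $(1-t)^{-\alpha}$): start with a single root labelled $0$; at step $n+1$ ($n\ge0$), when the current tree has nodes $0,1,\dots,n$, the new node labelled $n+1$ is attached as a child to a non-root node $v$ with probability $\frac{d(v)+\alpha}{\beta+(\alpha+1)n}$ and to the root with probability $\frac{d(\mathrm{root})+\beta}{\beta+(\alpha+1)n}$, where $d(v)$ is the current outdegree of $v$. *)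

From HB Require Import structures.
From mathcomp Require Import all_boot all_order all_algebra.
Set Implicit Arguments. Unset Strict Implicit. Unset Printing Implicit Defensive.
Import Order.TTheory GRing.Theory Num.Theory.
Local Open Scope ring_scope.

(* A finite discrete (sub)distribution is a list of weighted outcomes;
   the probability of an event is the total weight of the outcomes in it. *)
Definition wprob (R : realFieldType) (S : Type) (D : seq (R * S)) (E : S -> bool) : R :=
  \sum_(x <- D) (if E x.2 then x.1 else 0).

(* ---------- Chinese restaurant process ----------
   State at time m: the list of blocks (in order of creation) of a partition
   of {1,...,m}; each block is a list of its elements. *)
Section CRP.
Variables (R : realFieldType) (a th : R).

Definition crp_step (m : nat) (x : R * seq (seq nat)) : seq (R * seq (seq nat)) :=
  let: (w, s) := x in
  rcons
    [seq (w * (((size (nth [::] s i))%:R - a) / (m%:R + th)),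
          set_nth [::] s i (rcons (nth [::] s i) m.+1)) | i <- iota 0 (size s)]
    (w * ((th + (size s)%:R * a) / (m%:R + th)), rcons s [:: m.+1]).

(* distribution of the state at time m (meaningful for m >= 1) *)
Fixpoint crp_dist (m : nat) : seq (R * seq (seq nat)) :=
  match m with
  | 0 => [:: (1, [::])]
  | m'.+1 => if m' is 0 then [:: (1, [:: [:: 1%N]])]
             else flatten [seq crp_step m' x | x <- crp_dist m']
  end.
End CRP.

Definition crp_blk (s : seq (seq nat)) (x : nat) : nat := find (fun b => x \in b) s.

(* the set partition of {1,...,n} (element k+1 encoded as k : 'I_n) *)
Definition crp_part (n : nat) (s : seq (seq nat)) : {set {set 'I_n}} :=
  [set [set i : 'I_n | crp_blk s i.+1 == crp_blk s j.+1] | j : 'I_n].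

(* ---------- growth process of T_{alpha,beta} ----------
   A tree with nodes 0 (root), 1, ..., m is encoded by its parent list
   par, where the parent of node j >= 1 is nth 0 par j.-1. *)
Section Tree.
Variables (R : realFieldType) (alpha beta : R).

Definition outdeg (par : seq nat) (v : nat) : nat := count_mem v par.

Definition node_weight (par : seq nat) (v : nat) : R :=
  if v == 0%N then (outdeg par v)%:R + beta else (outdeg par v)%:R + alpha.

Definition tree_step (m : nat) (x : R * seq nat) : seq (R * seq nat) :=
  let: (w, par) := x in
  [seq (w * (node_weight par v / (beta + (alpha + 1) * m%:R)), rcons par v)
  | v <- iota 0 m.+1].

Fixpoint tree_dist (m : nat) : seq (R * seq nat) :=
  match m with
  | 0 => [:: (1, [::])]
  | m'.+1 => flatten [seq tree_step m' x | x <- tree_dist m']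
  end.
End Tree.

Fixpoint top_anc (fuel : nat) (par : seq nat) (j : nat) : nat :=
  match fuel with
  | 0 => j
  | f.+1 => let p := nth 0%N par j.-1 in
            if p == 0%N then j else top_anc f par p
  end.

Definition branch_of (par : seq nat) (j : nat) : nat := top_anc j par j.

Definition tree_part (n : nat) (par : seq nat) : {set {set 'I_n}} :=
  [set [set i : 'I_n | branch_of par i.+1 == branch_of par j.+1] | j : 'I_n].

From HB Require Import structures.
From mathcomp Require Import all_boot all_order all_algebra.
From mathcomp Require Import ring lra zify.
Import Order.TTheory GRing.Theory Num.Theory.
Local Open Scope ring_scope.

Set Implicit Arguments.
Unset Strict Implicit.

(* Both processes are lumped onto one Markov chain on codes (block sizes, and
   the block number of each element, blocks numbered in order of creation).
   For the restaurant this is immediate. In the tree, a branch with s nodes is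
   itself a tree, so the outdegrees of its nodes add up to s - 1 and its total
   attachment weight is (s - 1) + s alpha = (1 + alpha) (s - a); the root, with
   k children, has weight k + beta = (1 + alpha) (theta + k a), and the
   normalisation is beta + (1 + alpha) n = (1 + alpha) (n + theta). Hence the
   branch codes follow the restaurant's transition kernel; as both chains start
   from the same code at time 1, the codes, and the partitions read off them,
   have the same law at every time. *)

Lemma iotaS_rcons n : iota 1 n.+1 = rcons (iota 1 n) n.+1.
Proof. by rewrite -cats1 -(addn1 n) iotaD add1n addn1. Qed.

Lemma count_mem_rcons (T : eqType) (t : seq T) x y :
  count_mem y (rcons t x) = (count_mem y t + (x == y))%N.
Proof. by rewrite -cats1 count_cat /= addn0. Qed.

Lemma find_set_nth (T : Type) (p : pred T) (x0 : T) s i y :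
  (i < size s)%N -> p y = p (nth x0 s i) -> find p (set_nth x0 s i y) = find p s.
Proof.
move=> ilt py; rewrite set_nthE ilt.
by rewrite -{3}(cat_take_drop i s) (drop_nth x0 ilt) !find_cat /= py.
Qed.

Lemma count_mem_take_ltn (T : eqType) (x0 x : T) (s : seq T) k l :
  nth x0 s k = x -> (k < l <= size s)%N ->
  (count_mem x (take k s) < count_mem x (take l s))%N.
Proof.
move=> sk /andP [kl ls]; rewrite -(subnKC kl) takeD count_cat.
rewrite (take_nth x0) ?count_mem_rcons ?sk ?eqxx; last exact: leq_trans ls.
lia.
Qed.

Lemma sum_nat_eq_cond (r : seq nat) (P : pred nat) v : uniq r ->
  (\sum_(u <- r | P u) (v == u))%N = (P v && (v \in r)).
Proof.
move=> r_uniq; rewrite big_mkcond /=.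
have [vr|vr] := boolP (v \in r); last first.
  rewrite andbF big1_seq // => u /andP [_ ur].
  by case: eqP => [vu|]; [move: vr; rewrite vu ur | case: (P u)].
rewrite (bigD1_seq v) //= eqxx big1 ?andbT ?addn0 => [|u /negbTE]; first by case: (P v).
by rewrite eq_sym => ->; case: (P u).
Qed.

Lemma sum_group_by (V : nmodType) (r : seq nat) (h : nat -> nat) (k : nat)
    (F : nat -> nat -> V) :
  {in r, forall v, h v < k}%N ->
  \sum_(v <- r) F (h v) v = \sum_(i <- iota 0 k) \sum_(v <- r | h v == i) F i v.
Proof.
move=> h_lt.
transitivity (\sum_(v <- r) \sum_(i <- iota 0 k) if h v == i then F i v else 0).
  apply: eq_big_seq => v vr.
  rewrite (bigD1_seq (h v)) ?iota_uniq ?mem_iota ?h_lt //= eqxx big1 ?addr0 //.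
  by move=> i; rewrite eq_sym => /negbTE ->.
by rewrite exchange_big; apply: eq_bigr => i _; rewrite -big_mkcond.
Qed.

(** * Weighted lists and lumping *)

Section WeightedLists.
Variable R : realFieldType.

Definition wexpect (S : Type) (D : seq (R * S)) (f : S -> R) : R :=
  \sum_(x <- D) x.1 * f x.2.

Lemma wprob_map (S S' : Type) (f : S' -> R * S) D E :
  wprob (map f D) E = \sum_(x <- D) (if E (f x).2 then (f x).1 else 0).
Proof. by rewrite /wprob big_map. Qed.

Lemma wprob_rcons (S : Type) (D : seq (R * S)) x E :
  wprob (rcons D x) E = wprob D E + (if E x.2 then x.1 else 0).
Proof. by rewrite /wprob -cats1 big_cat big_seq1. Qed.

Lemma wprob_flatten_map (S S' : Type) (f : S' -> seq (R * S)) D E :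
  wprob (flatten (map f D)) E = \sum_(x <- D) wprob (f x) E.
Proof. by rewrite /wprob big_flatten /= big_map. Qed.

Lemma eq_in_wprob (S : eqType) (D : seq (R * S)) (E1 E2 : S -> bool) :
  {in D, forall x, E1 x.2 = E2 x.2} -> wprob D E1 = wprob D E2.
Proof. by move=> eqE; apply: eq_big_seq => x /eqE ->. Qed.

Lemma wprob_wexpect (S : Type) (D : seq (R * S)) (E : S -> bool) :
  wprob D E = wexpect D (fun s => (E s)%:R).
Proof. by apply: eq_bigr => x _; case: (E x.2); rewrite ?mulr1 ?mulr0. Qed.

Lemma wexpect_comp (S T : eqType) (D : seq (R * S)) (g : S -> T) (f : T -> R)
    (U : seq T) :
  uniq U -> {in D, forall x, g x.2 \in U} ->
  wexpect D (f \o g) = \sum_(c <- U) wprob D (fun s => g s == c) * f c.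
Proof.
move=> uU DU; rewrite /wprob; symmetry.
under eq_bigr do rewrite mulr_suml.
rewrite exchange_big /=; apply: eq_big_seq => x xD.
under eq_bigr do rewrite (fun_if (fun y => y * f _)) mul0r.
rewrite (bigD1_seq (g x.2)) ?DU //= eqxx big1 ?addr0 // => c /negbTE.
by rewrite eq_sym => ->.
Qed.

Section SameLaw.
Variables (S1 S2 T : eqType) (D1 : seq (R * S1)) (D2 : seq (R * S2)).
Variables (g1 : S1 -> T) (g2 : S2 -> T).
Hypothesis same_law :
  forall c, wprob D1 (fun s => g1 s == c) = wprob D2 (fun s => g2 s == c).

Lemma wexpect_same_law (f : T -> R) : wexpect D1 (f \o g1) = wexpect D2 (f \o g2).
Proof.
pose U := undup ([seq g1 x.2 | x <- D1] ++ [seq g2 x.2 | x <- D2]).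
have uU : uniq U := undup_uniq _.
rewrite (wexpect_comp f uU); last first.
  by move=> x xD; rewrite mem_undup mem_cat (map_f (fun x => g1 x.2)).
rewrite (wexpect_comp f uU); last first.
  by move=> x xD; rewrite mem_undup mem_cat (map_f (fun x => g2 x.2)) ?orbT.
by apply: eq_bigr => c _; rewrite same_law.
Qed.

Lemma wprob_same_law (E : pred T) :
  wprob D1 (fun s => E (g1 s)) = wprob D2 (fun s => E (g2 s)).
Proof. by rewrite !wprob_wexpect (wexpect_same_law (fun c => (E c)%:R)). Qed.

End SameLaw.

Definition lumps_onto (S T : eqType) (D : nat -> seq (R * S)) (g : nat -> S -> T)
    (K : nat -> T -> seq (R * T)) :=
  forall n, (0 < n)%N -> forall c,
    wprob (D n.+1) (fun s => g n.+1 s == c)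
    = wexpect (D n) (fun s => wprob (K n (g n s)) (fun t => t == c)).

Lemma lumps_onto_flatten (S T : eqType) (D : nat -> seq (R * S))
    (step : nat -> R * S -> seq (R * S)) (g : nat -> S -> T)
    (K : nat -> T -> seq (R * T)) :
  (forall n, (0 < n)%N -> D n.+1 = flatten (map (step n) (D n))) ->
  (forall n, (0 < n)%N -> {in D n, forall x c,
     wprob (step n x) (fun s => g n.+1 s == c)
     = x.1 * wprob (K n (g n x.2)) (fun t => t == c)}) ->
  lumps_onto D g K.
Proof.
move=> DS step_g n n0 c; rewrite DS // wprob_flatten_map.
by apply: eq_big_seq => x xD; rewrite step_g.
Qed.

Lemma lumps_onto_same_law (S1 S2 T : eqType) (D1 : nat -> seq (R * S1))
    (D2 : nat -> seq (R * S2)) (g1 : nat -> S1 -> T) (g2 : nat -> S2 -> T)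
    (K : nat -> T -> seq (R * T)) :
  lumps_onto D1 g1 K -> lumps_onto D2 g2 K ->
  (forall c, wprob (D1 1%N) (fun s => g1 1%N s == c)
             = wprob (D2 1%N) (fun s => g2 1%N s == c)) ->
  forall n, (0 < n)%N -> forall c,
    wprob (D1 n) (fun s => g1 n s == c) = wprob (D2 n) (fun s => g2 n s == c).
Proof.
move=> lump1 lump2 law1; elim=> // -[_ _|n IH _ c]; first exact: law1.
rewrite lump1 // lump2 //.
exact: (wexpect_same_law (IH isT) (fun t => wprob (K n.+1 t) (fun u => u == c))).
Qed.

End WeightedLists.

(* A code [(sz, t)] records the sizes of the blocks of a partition of
   {1,...,n}, numbered in order of creation, and for each element 1..n the
   number of its block; [code_step] is the Chinese restaurant process on codes. *)
Definition code_step (R : realFieldType) (a th : R) (n : nat) (c : seq nat * seq nat)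
    : seq (R * (seq nat * seq nat)) :=
  let: (sz, t) := c in
  rcons [seq (((nth 0%N sz i)%:R - a) / (n%:R + th), (incr_nth sz i, rcons t i))
        | i <- iota 0 (size sz)]
        ((th + (size sz)%:R * a) / (n%:R + th), (rcons sz 1%N, rcons t (size sz))).

Definition code_part (n : nat) (t : seq nat) : {set {set 'I_n}} :=
  [set [set i : 'I_n | nth 0%N t i == nth 0%N t j] | j : 'I_n].

(** * The Chinese restaurant process *)

Definition crp_code (n : nat) (s : seq (seq nat)) : seq nat * seq nat :=
  (map size s, map (crp_blk s) (iota 1 n)).

Definition crp_wf (n : nat) (s : seq (seq nat)) : bool :=
  all (all (fun x => x <= n)%N) s && all (fun j => crp_blk s j < size s)%N (iota 1 n).

Definition crp_join (s : seq (seq nat)) (i m : nat) : seq (seq nat) :=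
  set_nth [::] s i (rcons (nth [::] s i) m).

Section CrpStep.
Variables (n : nat) (s : seq (seq nat)).
Hypothesis wf_s : crp_wf n s.

Lemma crp_wf_notin : ~~ has (fun b => n.+1 \in b) s.
Proof.
case/andP: wf_s => /allP small _; apply/hasPn => b bs; apply/negP.
by move/(allP (small b bs)); rewrite ltnn.
Qed.

Lemma crp_blk_join i j : (i < size s)%N ->
  crp_blk (crp_join s i n.+1) j = if j == n.+1 then i else crp_blk s j.
Proof.
move=> ilt; rewrite /crp_blk /crp_join; case: eqP => [->|/eqP jn].
  rewrite set_nthE ilt find_cat size_take ilt /= mem_rcons mem_head addn0.
  have /hasPn notin := crp_wf_notin.
  suff /negbTE -> : ~~ has (fun b => n.+1 \in b) (take i s) by [].
  by apply/hasPn => b /mem_take/notin.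
by rewrite find_set_nth // mem_rcons in_cons (negbTE jn).
Qed.

Lemma crp_blk_open j : j \in iota 1 n.+1 ->
  crp_blk (rcons s [:: n.+1]) j = if j == n.+1 then size s else crp_blk s j.
Proof.
rewrite /crp_blk -cats1 find_cat iotaS_rcons mem_rcons in_cons.
case: eqP => [->|_] /= jin; first by rewrite (negbTE crp_wf_notin) /= mem_head addn0.
case/andP: wf_s => _ /allP blk_lt.
by have := blk_lt j jin; rewrite -has_find => ->.
Qed.

Lemma crp_wf_join i : (i < size s)%N -> crp_wf n.+1 (crp_join s i n.+1).
Proof.
move=> ilt; case/andP: wf_s => /allP small /allP blk_lt; apply/andP; split.
  apply/allP => b; rewrite /crp_join set_nthE ilt mem_cat in_cons.
  have small' b' : b' \in s -> all (fun x => x <= n.+1)%N b'.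
    by move=> /small /allP le_n; apply/allP => x /le_n /leqW.
  case/or3P => [/mem_take/small'|/eqP->|/mem_drop/small'] //.
  rewrite all_rcons leqnn; exact: small' (mem_nth [::] ilt).
apply/allP => j jin; rewrite crp_blk_join // size_set_nth (maxn_idPr ilt).
case: eqP => // jn; apply: blk_lt.
by move: jin; rewrite iotaS_rcons mem_rcons in_cons => /orP [/eqP|].
Qed.

Lemma crp_wf_open : crp_wf n.+1 (rcons s [:: n.+1]).
Proof.
case/andP: wf_s => /allP small /allP blk_lt; apply/andP; split.
  rewrite all_rcons /= leqnn; apply/allP => b /small /allP le_n.
  by apply/allP => x /le_n /leqW.
apply/allP => j jin; rewrite crp_blk_open // size_rcons.
case: eqP => // jn; apply: leqW; apply: blk_lt.
by move: jin; rewrite iotaS_rcons mem_rcons in_cons => /orP [/eqP|].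
Qed.

Lemma crp_code_join i : (i < size s)%N ->
  crp_code n.+1 (crp_join s i n.+1)
  = (incr_nth (map size s) i, rcons (crp_code n s).2 i).
Proof.
move=> ilt; rewrite /crp_code; congr (_, _).
  apply: (@eq_from_nth _ 0%N) => [|k].
    by rewrite size_map size_incr_nth size_map ilt size_set_nth (maxn_idPr ilt).
  rewrite size_map size_set_nth (maxn_idPr ilt) => klt.
  rewrite (nth_map [::]) ?size_set_nth ?(maxn_idPr ilt) // nth_set_nth /=.
  rewrite nth_incr_nth (nth_map [::]) // eq_sym.
  by case: eqP => [->|]; rewrite ?size_rcons.
rewrite iotaS_rcons map_rcons crp_blk_join // eqxx; congr rcons.
apply/eq_in_map => j; rewrite crp_blk_join // mem_iota; case: eqP => // ->.
by rewrite ltnn andbF.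
Qed.

Lemma crp_code_open :
  crp_code n.+1 (rcons s [:: n.+1])
  = (rcons (map size s) 1%N, rcons (crp_code n s).2 (size s)).
Proof.
rewrite /crp_code map_rcons iotaS_rcons map_rcons crp_blk_open ?eqxx; last first.
  by rewrite iotaS_rcons mem_rcons mem_head.
congr (_, rcons _ _); apply/eq_in_map => j jin.
rewrite crp_blk_open ?iotaS_rcons ?mem_rcons ?in_cons ?jin ?orbT //.
by case: eqP => // jn; move: jin; rewrite jn mem_iota ltnn andbF.
Qed.

End CrpStep.

Section CrpLumping.
Variables (R : realFieldType) (a th : R).

Lemma crp_distS n : (0 < n)%N ->
  crp_dist a th n.+1 = flatten (map (crp_step a th n) (crp_dist a th n)).
Proof. by case: n. Qed.

Lemma crp_dist_wf n : (0 < n)%N -> {in crp_dist a th n, forall x, crp_wf n x.2}.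
Proof.
elim: n => // -[_ _ x|n IH _ x]; first by rewrite inE => /eqP ->.
rewrite crp_distS // => /flatten_mapP [[w s] /(IH isT) wf_s].
rewrite mem_rcons in_cons => /orP [/eqP -> /=|]; first exact: crp_wf_open.
by case/mapP => i; rewrite mem_iota => /andP [_ ilt] ->; apply: crp_wf_join.
Qed.

Lemma crp_step_code n x : crp_wf n x.2 -> forall c,
  wprob (crp_step a th n x) (fun s => crp_code n.+1 s == c)
  = x.1 * wprob (code_step a th n (crp_code n x.2)) (fun t => t == c).
Proof.
case: x => w s /= wf_s c.
rewrite /crp_step /code_step /= !wprob_rcons !wprob_map mulrDr mulr_sumr size_map.
rewrite -/(crp_code n.+1 (rcons s [:: n.+1])) crp_code_open //.
rewrite (fun_if (fun y => w * y)) mulr0; congr (_ + _).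
apply: eq_big_seq => i; rewrite mem_iota => /andP [_ ilt] /=.
rewrite -/(crp_code n.+1 (crp_join s i n.+1)) crp_code_join // (nth_map [::]) //.
by rewrite (fun_if (fun y => w * y)) mulr0.
Qed.

Lemma crp_lumps : lumps_onto (crp_dist a th) crp_code (code_step a th).
Proof.
apply: lumps_onto_flatten => [|n n0 x /(crp_dist_wf n0)]; first exact: crp_distS.
exact: crp_step_code.
Qed.

End CrpLumping.

(** * The growth process of T_(alpha,beta) *)

Definition parents_precede (par : seq nat) : Prop :=
  forall k, (k < size par)%N -> (nth 0%N par k <= k)%N.

Section TopAncestor.
Variable par : seq nat.
Hypothesis par_ok : parents_precede par.

Lemma top_anc_fuel f g j : (0 < j)%N -> (j <= size par)%N ->
  (j <= f)%N -> (j <= g)%N -> top_anc f par j = top_anc g par j.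
Proof.
elim: f g j => [|f IH] [|g] j j0 js jf jg; try lia.
rewrite /=; case: ifP => // /negbT; rewrite -lt0n => p0.
have par_j : (nth 0%N par j.-1 <= j.-1)%N by apply: par_ok; lia.
by apply: IH => //; lia.
Qed.

Lemma top_anc_spec f j : (0 < j)%N -> (j <= size par)%N -> (j <= f)%N ->
  [/\ (0 < top_anc f par j)%N, (top_anc f par j <= j)%N
    & nth 0%N par (top_anc f par j).-1 = 0%N].
Proof.
elim: f j => [|f IH] j j0 js jf; first lia.
rewrite /=; case: ifP => [/eqP -> //|/negbT]; rewrite -lt0n => p0.
have par_j : (nth 0%N par j.-1 <= j.-1)%N by apply: par_ok; lia.
have [||top0 top_le ->] := IH _ p0; try lia.
by split=> //; lia.
Qed.

Lemma top_anc_rcons v f j : (0 < j)%N -> (j <= size par)%N ->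
  top_anc f (rcons par v) j = top_anc f par j.
Proof.
elim: f j => [|f IH] j j0 js //=.
rewrite nth_rcons (_ : j.-1 < size par)%N; last lia.
case: ifP => // /negbT; rewrite -lt0n => p0.
have par_j : (nth 0%N par j.-1 <= j.-1)%N by apply: par_ok; lia.
by apply: IH => //; lia.
Qed.

Lemma branch_of_spec j : (0 < j)%N -> (j <= size par)%N ->
  [/\ (0 < branch_of par j)%N, (branch_of par j <= j)%N
    & nth 0%N par (branch_of par j).-1 = 0%N].
Proof. by move=> j0 js; apply: top_anc_spec. Qed.

Lemma branch_of_rcons v j : (0 < j)%N -> (j <= size par)%N ->
  branch_of (rcons par v) j = branch_of par j.
Proof. by move=> j0 js; rewrite /branch_of top_anc_rcons. Qed.

Lemma branch_of_rcons_last v : (v <= size par)%N ->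
  branch_of (rcons par v) (size par).+1
  = if v == 0%N then (size par).+1 else branch_of par v.
Proof.
move=> vs; rewrite /branch_of /= nth_rcons ltnn eqxx.
case: eqP => // /eqP; rewrite -lt0n => v0.
by rewrite top_anc_rcons //; apply: top_anc_fuel => //; lia.
Qed.

End TopAncestor.

(* Branches are numbered in order of creation: the branch of [j] gets the
   number of children of the root older than the child heading it. *)
Definition branch_index (par : seq nat) (j : nat) : nat :=
  count_mem 0%N (take (branch_of par j).-1 par).

Definition branch_labels (n : nat) (par : seq nat) : seq nat :=
  map (branch_index par) (iota 1 n).

Definition tree_code (n : nat) (par : seq nat) : seq nat * seq nat :=
  (mkseq (fun i => count_mem i (branch_labels n par)) (outdeg par 0),
   branch_labels n par).

Definition branch_edges (n : nat) (par : seq nat) (i : nat) : nat :=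
  \sum_(v <- iota 1 n | branch_index par v == i) outdeg par v.

(* Each branch is a tree, so it has one more node than it has edges. *)
Definition tree_wf (n : nat) (par : seq nat) : Prop :=
  [/\ size par = n, parents_precede par,
      all (fun l => l < outdeg par 0)%N (branch_labels n par)
    & forall i, (i < outdeg par 0)%N ->
        (branch_edges n par i).+1 = count_mem i (branch_labels n par)].

Section BranchIndex.
Variable par : seq nat.
Hypothesis par_ok : parents_precede par.

Lemma branch_index_rcons v j : (0 < j)%N -> (j <= size par)%N ->
  branch_index (rcons par v) j = branch_index par j.
Proof.
move=> j0 js; rewrite /branch_index branch_of_rcons // -cats1 takel_cat //.
by have [] := branch_of_spec par_ok j0 js; lia.
Qed.

Lemma branch_index_rcons_last v : (v <= size par)%N ->
  branch_index (rcons par v) (size par).+1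
  = if v == 0%N then outdeg par 0 else branch_index par v.
Proof.
move=> vs; rewrite /branch_index branch_of_rcons_last //.
case: eqP => [_|/eqP]; first by rewrite /= -cats1 take_size_cat.
rewrite -lt0n => v0; rewrite -cats1 takel_cat //.
by have [] := branch_of_spec par_ok v0 vs; lia.
Qed.

Lemma eq_branch_index j1 j2 : (0 < j1 <= size par)%N -> (0 < j2 <= size par)%N ->
  (branch_index par j1 == branch_index par j2)
  = (branch_of par j1 == branch_of par j2).
Proof.
move=> /andP [j10 j1s] /andP [j20 j2s].
have [b10 b1j b1root] := branch_of_spec par_ok j10 j1s.
have [b20 b2j b2root] := branch_of_spec par_ok j20 j2s.
rewrite /branch_index.
case: (ltngtP (branch_of par j1) (branch_of par j2)) => [lt|gt|->]; rewrite ?eqxx //.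
  have range : ((branch_of par j1).-1 < (branch_of par j2).-1 <= size par)%N by lia.
  by apply/negbTE; rewrite neq_ltn (count_mem_take_ltn b1root range).
have range : ((branch_of par j2).-1 < (branch_of par j1).-1 <= size par)%N by lia.
by apply/negbTE; rewrite neq_ltn (count_mem_take_ltn b2root range) orbT.
Qed.

End BranchIndex.

Lemma parents_precede_rcons par v :
  parents_precede par -> (v <= size par)%N -> parents_precede (rcons par v).
Proof.
move=> par_ok vs k; rewrite size_rcons ltnS nth_rcons leq_eqVlt.
by case/orP => [/eqP ->|klt]; rewrite ?ltnn ?eqxx // klt par_ok.
Qed.

Lemma outdeg_rcons par v u : outdeg (rcons par v) u = (outdeg par u + (v == u))%N.
Proof. exact: count_mem_rcons. Qed.

Section TreeStep.
Variables (n : nat) (par : seq nat) (v : nat).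
Hypotheses (par_wf : tree_wf n par) (vn : (v <= n)%N).

Let new_label := if v == 0%N then outdeg par 0 else branch_index par v.

Lemma branch_index_lt u : (0 < u <= n)%N -> (branch_index par u < outdeg par 0)%N.
Proof.
case: par_wf => _ _ /allP labels_lt _ u_range.
by apply: labels_lt; apply: map_f; rewrite mem_iota add1n ltnS.
Qed.

Lemma count_root_degree_labels : count_mem (outdeg par 0) (branch_labels n par) = 0%N.
Proof.
case: par_wf => _ _ /allP labels_lt _.
by apply/count_memPn/negP => /labels_lt; rewrite ltnn.
Qed.

Lemma branch_labels_rcons :
  branch_labels n.+1 (rcons par v) = rcons (branch_labels n par) new_label.
Proof.
case: par_wf => size_par par_ok _ _.
rewrite /branch_labels iotaS_rcons map_rcons -{2}size_par.
rewrite branch_index_rcons_last ?size_par //.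
congr rcons; apply/eq_in_map => j; rewrite mem_iota => /andP [j0 jn].
by rewrite branch_index_rcons // size_par; lia.
Qed.

Lemma branch_edges_rcons i :
  branch_edges n.+1 (rcons par v) i
  = (branch_edges n par i + ((v != 0%N) && (branch_index par v == i)))%N.
Proof.
case: par_wf => size_par par_ok _ _.
have last_leaf : outdeg (rcons par v) n.+1 = 0%N.
  apply/count_memPn; rewrite mem_rcons in_cons negb_or gtn_eqF ?ltnS //=.
  apply/negP => /(nthP 0%N) [k klt park].
  have := par_ok k klt; rewrite park; move: klt; rewrite size_par; lia.
rewrite /branch_edges iotaS_rcons big_rcons last_leaf if_same /= addn0.
have old_cond u : (u \in iota 1 n) && (branch_index (rcons par v) u == i)
                  = (u \in iota 1 n) && (branch_index par u == i).
  rewrite mem_iota; case/boolP: (0 < u < 1 + n)%N => //= /andP [u0 un].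
  by rewrite branch_index_rcons // size_par; lia.
rewrite big_seq_cond [in RHS]big_seq_cond.
under eq_bigl => u do rewrite old_cond.
rewrite (eq_bigr (fun u => outdeg par u + (v == u)))%N => [|u _]; last first.
  exact: outdeg_rcons.
rewrite big_split /= sum_nat_eq_cond ?iota_uniq // mem_iota andbC andbA andbb.
by rewrite lt0n add1n ltnS vn andbT.
Qed.

Lemma tree_wf_rcons : tree_wf n.+1 (rcons par v).
Proof.
case: par_wf => size_par par_ok /allP labels_lt edges_labels.
split.
- by rewrite size_rcons size_par.
- by apply: parents_precede_rcons => //; rewrite size_par.
- rewrite branch_labels_rcons all_rcons outdeg_rcons /new_label.
  case: eqP => [_|/eqP v0]; last first.
    by rewrite addn0 branch_index_lt ?lt0n ?v0 //=; apply/allP.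
  by rewrite addn1 ltnSn /=; apply/allP => l /labels_lt /leqW.
move=> i; rewrite branch_edges_rcons branch_labels_rcons count_mem_rcons outdeg_rcons.
rewrite /new_label; case: eqP => [_|/eqP v0] /=; last first.
  by rewrite !addn0 => /edges_labels <-; rewrite addSn.
rewrite addn0 addn1 ltnS leq_eqVlt => /orP [/eqP ->|ilt]; last first.
  by rewrite gtn_eqF // addn0 edges_labels.
rewrite eqxx addn1; congr S.
rewrite count_root_degree_labels /branch_edges big1_seq // => u.
rewrite mem_iota add1n ltnS => /andP [/eqP idx_u] /branch_index_lt.
by rewrite idx_u ltnn.
Qed.

Lemma tree_code_rcons :
  tree_code n.+1 (rcons par v)
  = if v == 0%N then (rcons (tree_code n par).1 1%N, rcons (tree_code n par).2 (outdeg par 0))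
    else (incr_nth (tree_code n par).1 (branch_index par v),
          rcons (tree_code n par).2 (branch_index par v)).
Proof.
rewrite /tree_code branch_labels_rcons outdeg_rcons /new_label.
case: eqP => [_|/eqP v0] /=; congr (_, _).
  rewrite addn1 mkseqS count_mem_rcons eqxx count_root_degree_labels; congr rcons.
  apply/eq_in_map => i; rewrite mem_iota => /andP [_ ilt].
  by rewrite count_mem_rcons gtn_eqF ?addn0.
have idx_lt : (branch_index par v < outdeg par 0)%N.
  by apply: branch_index_lt; rewrite lt0n v0.
apply: (@eq_from_nth _ 0%N) => [|i]; rewrite ?size_incr_nth !size_mkseq addn0.
  by rewrite idx_lt.
by move=> ilt; rewrite nth_incr_nth !nth_mkseq // count_mem_rcons addnC.
Qed.

End TreeStep.

Section TreeLumping.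
Variables (R : realFieldType) (alpha beta : R).

Lemma tree_dist_wf n : {in tree_dist alpha beta n, forall x, tree_wf n x.2}.
Proof.
elim: n => [x|n IH x].
  by rewrite inE => /eqP -> /=; split.
case/flatten_mapP => -[w par] /IH par_wf /mapP [v].
by rewrite mem_iota add0n ltnS => /andP [_ vn] ->; apply: tree_wf_rcons.
Qed.

Lemma branch_weight n par i : tree_wf n par -> (i < outdeg par 0)%N ->
  \sum_(v <- iota 1 n | branch_index par v == i) node_weight alpha beta par v
  = (count_mem i (branch_labels n par))%:R * (1 + alpha) - 1.
Proof.
case=> _ _ _ edges_labels ilt.
rewrite big_seq_cond (eq_bigr (fun v => (outdeg par v)%:R + alpha)); last first.
  by move=> v /andP []; rewrite mem_iota /node_weight => /andP [/gtn_eqF ->].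
rewrite -big_seq_cond big_split /= -natr_sum big_const_seq iter_addr_0.
have -> : count (fun v => branch_index par v == i) (iota 1 n)
          = count_mem i (branch_labels n par) by rewrite count_map.
rewrite -edges_labels // -/(branch_edges n par i) -[alpha *+ _]mulr_natr.
by rewrite -addn1 natrD; ring.
Qed.

Lemma tree_rate n x : 0 < alpha -> 0 < beta ->
  x / (beta + (alpha + 1) * n%:R) = x / (1 + alpha) / (n%:R + beta / (1 + alpha)).
Proof.
move=> alpha_gt0 beta_gt0; have n_ge0 : 0 <= n%:R :> R := ler0n R n.
have alpha1_gt0 : 0 < 1 + alpha by lra.
have D_gt0 : 0 < n%:R * (1 + alpha) + beta by nra.
by field; rewrite !gt_eqF.
Qed.

Lemma tree_step_code n x : 0 < alpha -> 0 < beta -> tree_wf n x.2 -> forall c,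
  wprob (tree_step alpha beta n x) (fun par => tree_code n.+1 par == c)
  = x.1 * wprob (code_step (1 + alpha)^-1 (beta / (1 + alpha)) n (tree_code n x.2))
                (fun t => t == c).
Proof.
case: x => w par /= alpha_gt0 beta_gt0 par_wf c.
set D := beta + (alpha + 1) * n%:R.
set sz := mkseq _ (outdeg par 0).
pose F i v := if (incr_nth sz i, rcons (branch_labels n par) i) == c
              then w * (node_weight alpha beta par v / D) else 0.
rewrite {1}/wprob big_cons big_map /= tree_code_rcons // eqxx -/sz.
rewrite (eq_big_seq (fun v => F (branch_index par v) v)); last first.
  by move=> v; rewrite mem_iota /F => /andP [v0 vn]; rewrite tree_code_rcons // gtn_eqF.
rewrite (@sum_group_by _ _ _ (outdeg par 0)); last first.
  by move=> v; rewrite mem_iota add1n ltnS; apply: branch_index_lt.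
have size_sz : size sz = outdeg par 0 := size_mkseq _ _.
have alpha1_neq0 : 1 + alpha != 0 by apply: lt0r_neq0; lra.
rewrite wprob_rcons wprob_map size_sz mulrDr [in RHS]addrC mulr_sumr /=.
congr (_ + _).
  rewrite (fun_if (fun y => w * y)) mulr0 /node_weight eqxx tree_rate //.
  by congr (if _ then w * (_ / _) else _); field.
apply: eq_big_seq => i; rewrite mem_iota add0n => ilt.
rewrite /F (fun_if (fun y => w * y)) mulr0; case: ifP => _; last by rewrite big1.
rewrite -mulr_sumr -mulr_suml branch_weight // tree_rate // nth_mkseq //.
by congr (w * (_ / _)); field.
Qed.

Lemma tree_lumps : 0 < alpha -> 0 < beta ->
  lumps_onto (tree_dist alpha beta) tree_code
             (code_step (1 + alpha)^-1 (beta / (1 + alpha))).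
Proof.
move=> alpha_gt0 beta_gt0; apply: (@lumps_onto_flatten _ _ _ _ (tree_step alpha beta)) => //.
by move=> n _ x /tree_dist_wf; apply: tree_step_code.
Qed.

End TreeLumping.

Lemma crp_tree_code_law1 (R : realFieldType) (alpha beta : R) : 0 < beta -> forall c,
  wprob (crp_dist (1 + alpha)^-1 (beta / (1 + alpha)) 1) (fun s => crp_code 1 s == c)
  = wprob (tree_dist alpha beta 1) (fun par => tree_code 1 par == c).
Proof.
move=> beta_gt0 c; rewrite /wprob !big_seq1 /= /node_weight /outdeg /=.
by rewrite mul1r mulr0 add0r !addr0 divff ?gt_eqF.
Qed.

Lemma crp_part_code n s : crp_part n s = code_part n (crp_code n s).2.
Proof.
apply: eq_imset => j; apply/setP => i.
by rewrite !inE !(nth_map 0%N) ?size_iota // !nth_iota // add1n.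
Qed.

Lemma tree_part_code n par : tree_wf n par -> tree_part n par = code_part n (tree_code n par).2.
Proof.
case=> size_par par_ok _ _; apply: eq_imset => j; apply/setP => i.
by rewrite !inE !(nth_map 0%N) ?size_iota // !nth_iota // add1n
  eq_branch_index ?size_par ?ltn_ord.
Qed.

Theorem proposition3 (R : realFieldType) (alpha beta : R) :
  0 < alpha -> 0 < beta ->
  forall (n : nat), (0 < n)%N ->
  forall P : {set {set 'I_n}},
    wprob (crp_dist (1 + alpha)^-1 (beta / (1 + alpha)) n)
          (fun s => crp_part n s == P)
    = wprob (tree_dist alpha beta n) (fun par => tree_part n par == P).
Proof.
move=> alpha_gt0 beta_gt0 n n_gt0 P.
have same_code_law := lumps_onto_same_law (crp_lumps _ _)
  (tree_lumps alpha_gt0 beta_gt0) (crp_tree_code_law1 alpha beta_gt0) n_gt0.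
rewrite (@eq_in_wprob _ _ _ _ (fun s => code_part n (crp_code n s).2 == P)); last first.
  by move=> x _; rewrite crp_part_code.
rewrite [RHS](@eq_in_wprob _ _ _ _ (fun par => code_part n (tree_code n par).2 == P)).
  exact: (wprob_same_law same_code_law (fun c => code_part n c.2 == P)).
by move=> x /tree_dist_wf wf_x; rewrite tree_part_code.
Qed.
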